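(* With $c_*=\frac2{\sqrt3}$, $h_1(c_* )<\pi$.
   Context: Let $K(R)=\frac{\exp(\frac{R^2-1}{2})}{R}$ for $R>0$ (strictly decreasing on $(0,1]$, $K(1)=1$). For $s\ge1$ let $R^-(s)\in(0,1]$ be the solution of $K(R)=s$ in $(0,1]$. For $c\ge c_*$, $h_1(c)=\int_{\pi/3}^{2\pi/3}\frac{d\psi}{1-[R^-(c\sin\psi)]^2}$. *)

From Stdlib Require Import Reals Lra ClassicalEpsilon.
From Coquelicot Require Import Coquelicot.
Open Scope R_scope.

Definition K (r : R) : R := exp ((r ^ 2 - 1) / 2) / r.

(* R^-(s): the solution R in (0,1] of K(R) = s (unique since K is strictly
   decreasing on (0,1]; exists for s >= 1). Chosen by Hilbert epsilon. *)
Definition Rminus_sol (s : R) : R :=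
  epsilon (inhabits 1) (fun r => 0 < r <= 1 /\ K r = s).

Definition h1_integrand (c : R) (psi : R) : R :=
  1 / (1 - (Rminus_sol (c * sin psi)) ^ 2).

Definition c_star : R := 2 / sqrt 3.

From Stdlib Require Import Reals Lra Psatz ClassicalEpsilon Classical.
From Coquelicot Require Import Coquelicot.
Open Scope R_scope.

(* With [r = R^-(s)] and [y = 1/(1 - r^2)], the identity [ln s = (r^2 - 1)/2 - ln r]
   and the bounds [1 - 1/s <= ln s], [-ln r <= (1/r^2 - r^2)/4] give
   [y^2 - y <= s/(4(s - 1))].  Since [c_* sin(pi/3) = 1] and
   [sin psi - sin(pi/3) = 2 sin((psi - pi/3)/2) sin((2pi/3 - psi)/2)], the quantity
   [s - 1] for [s = c_* sin psi] vanishes only linearly at each end, so the integrand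
   is bounded by [5/8 + 1/(k sqrt(2 (psi - pi/3)(2pi/3 - psi)))] with [k = 23/25].
   That majorant has an arcsine primitive and total integral
   [5pi/24 + pi/(k sqrt 2) < pi]; the integrand being positive, its improper integral
   is at most this. *)

Lemma ln_ge_1_sub_inv x : 0 < x -> 1 - / x <= ln x.
Proof.
  intros Hx. pose proof (exp_ineq1_le (- ln x)) as H.
  rewrite exp_Ropp, exp_ln in H by lra. lra.
Qed.

Lemma ln_le_half_sub_inv x : 1 <= x -> ln x <= (x - / x) / 2.
Proof.
  intros Hx.
  set (phi := fun t => (t - / t) / 2 - ln t).
  destruct (MVT_gen phi 1 x (fun t => (1 - / t) ^ 2 / 2)) as [c [Hc Hphi]].
  - intros t Ht. rewrite Rmin_left in Ht by lra.
    unfold phi. auto_derive; [lra | field; lra].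
  - intros t Ht. rewrite Rmin_left in Ht by lra.
    apply continuity_pt_filterlim, (ex_derive_continuous phi).
    unfold phi. auto_derive. lra.
  - rewrite Rmin_left, Rmax_right in Hc by lra.
    unfold phi in Hphi. rewrite ln_1, Rinv_1 in Hphi.
    assert (0 <= (1 - / c) ^ 2 / 2 * (x - 1)).
    { apply Rmult_le_pos; [apply Rmult_le_pos; [apply pow2_ge_0 | lra] | lra]. }
    lra.
Qed.

Lemma neg_ln_le r : 0 < r <= 1 -> - ln r <= (/ r ^ 2 - r ^ 2) / 4.
Proof.
  intros Hr.
  assert (Hr2 : 1 <= / r ^ 2).
  { rewrite <- Rinv_1. apply Rinv_le_contravar; nra. }
  pose proof (ln_le_half_sub_inv _ Hr2) as H.
  rewrite ln_Rinv, ln_pow, Rinv_inv in H by nra. simpl INR in H. lra.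
Qed.

Lemma sin_ge_linear p : 0 <= p <= 2 / 3 -> 23 / 25 * p <= sin p.
Proof.
  intros Hp. assert (3 <= PI) by (pose proof PI2_3_2; lra).
  destruct (SIN p ltac:(lra) ltac:(lra)) as [HS _].
  replace (sin_lb p) with (p * (1 - p ^ 2 / 6 + p ^ 4 / 120 - p ^ 6 / 5040)) in HS
    by (unfold sin_lb, sin_approx, sin_term; simpl; field).
  assert (p ^ 2 <= 4 / 9) by nra.
  assert (0 <= p ^ 4) by nra.
  assert (p ^ 6 <= p ^ 4) by nra.
  nra.
Qed.

Lemma is_derive_asin x : -1 < x < 1 -> is_derive asin x (/ sqrt (1 - x ^ 2)).
Proof.
  intros Hx. apply is_derive_Reals.
  replace (/ sqrt (1 - x ^ 2)) with (derive_pt asin x (derivable_pt_asin x Hx)).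
  - unfold derive_pt. destruct (derivable_pt_asin x Hx) as [l Hl]. exact Hl.
  - rewrite derive_pt_asin. unfold Rsqr. rewrite Rdiv_1_l. f_equal. f_equal. ring.
Qed.

Lemma is_derive_asin_affine a b x : a < x < b ->
  is_derive (fun t => asin ((2 * t - a - b) / (b - a))) x (/ sqrt ((x - a) * (b - x))).
Proof.
  intros Hx.
  set (u := (2 * x - a - b) / (b - a)).
  assert (Hu : -1 < u < 1)
    by (unfold u; split; [apply Rlt_div_r | apply Rlt_div_l]; lra).
  assert (HD : 0 < (x - a) * (b - x)) by nra.
  assert (Hsqrt : sqrt (1 - u ^ 2) = 2 * sqrt ((x - a) * (b - x)) / (b - a)).
  { rewrite <- (sqrt_pow2 (2 * sqrt ((x - a) * (b - x)) / (b - a))).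
    - f_equal. unfold Rdiv. rewrite !Rpow_mult_distr, pow2_sqrt by lra.
      unfold u. field. lra.
    - apply Rdiv_le_0_compat; [apply Rmult_le_pos, sqrt_pos |]; lra. }
  assert (Hinner : is_derive (fun t => (2 * t - a - b) / (b - a)) x (2 / (b - a)))
    by (auto_derive; [lra | field; lra]).
  pose proof (is_derive_comp asin (fun t => (2 * t - a - b) / (b - a)) x _ _
    (is_derive_asin u Hu) Hinner) as H.
  replace (/ sqrt ((x - a) * (b - x))) with (scal (2 / (b - a)) (/ sqrt (1 - u ^ 2))).
  - exact H.
  - rewrite Hsqrt. assert (0 < sqrt ((x - a) * (b - x))) by (apply sqrt_lt_R0; lra).
    unfold scal; simpl; unfold mult; simpl. field. lra.
Qed.

Lemma inv_sqrt_continuous a b x : a < x < b ->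
  continuous (fun t => / sqrt ((t - a) * (b - t))) x.
Proof.
  intros Hx. assert (Hsqrt : 0 < sqrt ((x - a) * (b - x))) by (apply sqrt_lt_R0; nra).
  apply (ex_derive_continuous (fun t => / sqrt ((t - a) * (b - t)))).
  auto_derive. unfold Rminus in Hsqrt. split; [nra | split; [lra | exact I]].
Qed.

Lemma RInt_inv_sqrt_le_PI a b u v : a < u -> u <= v -> v < b ->
  RInt (fun x => / sqrt ((x - a) * (b - x))) u v <= PI.
Proof.
  intros Hu Huv Hv.
  rewrite (is_RInt_unique _ u v _ (is_RInt_derive (fun t => asin ((2 * t - a - b) / (b - a))) _ u v
    ltac:(rewrite Rmin_left, Rmax_right by lra; intros x Hx; apply is_derive_asin_affine; lra)
    ltac:(rewrite Rmin_left, Rmax_right by lra; intros x Hx; apply inv_sqrt_continuous; lra))).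
  pose proof (asin_bound ((2 * u - a - b) / (b - a))).
  pose proof (asin_bound ((2 * v - a - b) / (b - a))).
  unfold minus, plus, opp; simpl. lra.
Qed.

Section NonnegImproperIntegral.

Variables (f : R -> R) (a b : R).
Hypothesis f_continuous : forall x, a < x < b -> continuous f x.
Hypothesis f_nonneg : forall x, a < x < b -> 0 <= f x.

Lemma ex_RInt_inner u v : a < u -> u <= v -> v < b -> ex_RInt f u v.
Proof.
  intros Hu Huv Hv. apply (ex_RInt_continuous f).
  rewrite Rmin_left, Rmax_right by lra. intros x Hx. apply f_continuous. lra.
Qed.

Lemma RInt_inner_monotone u u' v' v : a < u -> u <= u' -> u' <= v' -> v' <= v -> v < b ->
  RInt f u' v' <= RInt f u v.
Proof.
  intros.
  rewrite <- (RInt_Chasles f u u' v), <- (RInt_Chasles f u' v' v)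
    by (apply ex_RInt_inner; lra).
  assert (0 <= RInt f u u')
    by (apply RInt_ge_0; [lra | apply ex_RInt_inner; lra | intros; apply f_nonneg; lra]).
  assert (0 <= RInt f v' v)
    by (apply RInt_ge_0; [lra | apply ex_RInt_inner; lra | intros; apply f_nonneg; lra]).
  unfold plus; simpl. lra.
Qed.

(* The improper integral is the supremum of the integrals over compact subintervals. *)
Lemma is_RInt_gen_nonneg_bounded (B : R) : a < b ->
  (forall u v, a < u -> u <= v -> v < b -> RInt f u v <= B) ->
  exists l, is_RInt_gen f (at_right a) (at_left b) l /\ l <= B.
Proof.
  intros Hab HB.
  set (E := fun w => exists u v, a < u /\ u <= v /\ v < b /\ w = RInt f u v).
  assert (HEB : is_upper_bound E B) by (intros w (u & v & Hu & Huv & Hv & ->); auto).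
  assert (HE : exists w, E w)
    by (exists (RInt f ((a + b) / 2) ((a + b) / 2)), ((a + b) / 2), ((a + b) / 2); lra).
  destruct (completeness E (ex_intro _ B HEB) HE) as [l [Hub Hlub]].
  exists l. split; [| apply Hlub, HEB].
  intros P [eps HP]. unfold filtermapi.
  assert (Hnear : exists w, E w /\ l - eps < w).
  { apply NNPP. intros Hno.
    assert (Hub' : is_upper_bound E (l - eps))
      by (intros w Hw; apply Rnot_lt_le; intros Hlt; apply Hno; exists w; auto).
    pose proof (Hlub _ Hub'). destruct eps as [e He]; simpl in *. lra. }
  destruct Hnear as [w [(u0 & v0 & Hu0 & Huv0 & Hv0 & ->) Hw]].
  apply Filter_prod with (Q := fun u => a < u <= u0) (R := fun v => v0 <= v < b).
  - assert (Hd : 0 < u0 - a) by lra.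
    exists (mkposreal _ Hd). intros y Hy Hay.
    change (Rabs (y - a) < u0 - a) in Hy. apply Rabs_def2 in Hy. lra.
  - assert (Hd : 0 < b - v0) by lra.
    exists (mkposreal _ Hd). intros y Hy Hyb.
    change (Rabs (y - b) < b - v0) in Hy. apply Rabs_def2 in Hy. lra.
  - intros u v [Hu1 Hu2] [Hv1 Hv2]. simpl.
    exists (RInt f u v). split; [apply (RInt_correct f), ex_RInt_inner; lra |].
    apply HP. change (Rabs (RInt f u v - l) < eps).
    assert (RInt f u v <= l) by (apply Hub; exists u, v; repeat split; lra).
    assert (RInt f u0 v0 <= RInt f u v) by (apply RInt_inner_monotone; lra).
    apply Rabs_def1; lra.
Qed.

End NonnegImproperIntegral.

Lemma K_1 : K 1 = 1.
Proof. unfold K. replace ((1 ^ 2 - 1) / 2) with 0 by field. rewrite exp_0. field. Qed.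

Lemma K_ge_half_add_inv r : 0 < r -> (r + / r) / 2 <= K r.
Proof.
  intros Hr. unfold K.
  replace ((r + / r) / 2) with ((1 + (r ^ 2 - 1) / 2) / r) by (field; lra).
  apply Rmult_le_compat_r; [left; apply Rinv_0_lt_compat; lra | apply exp_ineq1_le].
Qed.

Lemma K_decreasing r1 r2 : 0 < r1 -> r1 < r2 -> r2 <= 1 -> K r2 < K r1.
Proof.
  intros H1 H12 H2. unfold K.
  set (d := (r2 ^ 2 - r1 ^ 2) / 2).
  replace ((r1 ^ 2 - 1) / 2) with ((r2 ^ 2 - 1) / 2 + - d) by (unfold d; field).
  rewrite exp_plus.
  (* [exp (-d) > 1 - d >= r1 / r2], the last step because [r2 (r1 + r2) <= 2] *)
  assert (Hd0 : 0 < d) by (unfold d; nra).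
  assert (Hd : r1 < exp (- d) * r2).
  { assert (1 + - d < exp (- d)) by (apply exp_ineq1; lra).
    assert (r2 * (r2 + r1) <= 2) by nra.
    assert (r1 <= (1 + - d) * r2) by (unfold d; nra).
    nra. }
  pose proof (exp_pos ((r2 ^ 2 - 1) / 2)).
  apply (Rmult_lt_reg_r (r1 * r2)); [nra |].
  field_simplify; nra.
Qed.

Lemma K_continuous r : 0 < r -> continuity_pt K r.
Proof.
  intros Hr. apply continuity_pt_filterlim, (ex_derive_continuous K).
  unfold K. auto_derive. lra.
Qed.

Lemma K_surjective s : 1 <= s -> exists r, 0 < r <= 1 /\ K r = s.
Proof.
  intros Hs. destruct (Req_dec s 1) as [-> | Hs1].
  { exists 1. split; [lra | apply K_1]. }
  set (x := / (2 * s)).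
  assert (Hx : 0 < x < 1).
  { unfold x. split; [apply Rinv_0_lt_compat | rewrite <- Rinv_1; apply Rinv_lt_contravar]; lra. }
  assert (HKx : s < K x).
  { eapply Rlt_le_trans; [| apply K_ge_half_add_inv; lra].
    replace ((x + / x) / 2) with (s + x / 2) by (unfold x; field; lra). lra. }
  destruct (Ranalysis5.IVT_interv (fun r => s - K r) x 1) as [r [Hr HKr]].
  - intros a Ha.
    apply continuity_pt_minus; [apply continuity_pt_const; intros ? ?; reflexivity |].
    apply K_continuous. lra.
  - lra.
  - lra.
  - rewrite K_1. lra.
  - exists r. split; lra.
Qed.

Lemma Rminus_sol_spec s : 1 <= s -> 0 < Rminus_sol s <= 1 /\ K (Rminus_sol s) = s.
Proof. intros Hs. unfold Rminus_sol. apply epsilon_spec, K_surjective, Hs. Qed.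

Lemma Rminus_sol_lt_1 s : 1 < s -> Rminus_sol s < 1.
Proof.
  intros Hs. destruct (Rminus_sol_spec s) as [[_ [H1 | H1]] HK]; [lra | exact H1 |].
  rewrite H1, K_1 in HK. lra.
Qed.

Lemma Rminus_sol_antitone s t : 1 <= s <= t -> Rminus_sol t <= Rminus_sol s.
Proof.
  intros Hst. destruct (Rminus_sol_spec s) as [Hs HKs]; [lra |].
  destruct (Rminus_sol_spec t) as [Ht HKt]; [lra |].
  apply Rnot_lt_le. intros Hlt.
  pose proof (K_decreasing _ _ (proj1 Hs) Hlt (proj2 Ht)). lra.
Qed.

(* The inverse-function theorem of [Ranalysis5] is stated for increasing
   functions, hence is applied to [r |-> - K r] and [t |-> Rminus_sol (- t)]. *)
Lemma Rminus_sol_continuous s : 1 < s -> continuous Rminus_sol s.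
Proof.
  intros Hs.
  destruct (Rminus_sol_spec (s + 1)) as [[Hlb _] HKlb]; [lra |].
  assert (Hlb1 : Rminus_sol (s + 1) < 1) by (apply Rminus_sol_lt_1; lra).
  set (lb := Rminus_sol (s + 1)) in *.
  assert (Hg : continuity_pt (fun t => Rminus_sol (- t)) (- s)).
  { apply (Ranalysis5.continuity_pt_recip_interv (fun r => - K r) _ lb 1 Hlb1);
      try rewrite HKlb, K_1.
    - intros x y Hx Hxy Hy. pose proof (K_decreasing x y). lra.
    - intros x Hx1 Hx2. unfold comp, id.
      rewrite (proj2 (Rminus_sol_spec (- x) ltac:(lra))). ring.
    - intros x Hx1 Hx2.
      split; [apply Rminus_sol_antitone; lra | apply (Rminus_sol_spec (- x)); lra].
    - intros a Ha. apply continuity_pt_opp, K_continuous. lra.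
    - lra. }
  apply (continuous_ext (comp (fun t => Rminus_sol (- t)) Ropp)).
  { intros t. unfold comp. now rewrite Ropp_involutive. }
  apply continuity_pt_filterlim, continuity_pt_comp;
    [apply continuity_pt_opp, continuity_pt_id | exact Hg].
Qed.

Definition h1_weight (s : R) : R := 1 / (1 - Rminus_sol s ^ 2).

Lemma h1_weight_gt_1 s : 1 < s -> 1 < h1_weight s.
Proof.
  intros Hs. destruct (Rminus_sol_spec s) as [[Hr0 _] _]; [lra |].
  pose proof (Rminus_sol_lt_1 s Hs). unfold h1_weight.
  set (r := Rminus_sol s) in *.
  assert (0 < 1 - r ^ 2 < 1) by nra.
  apply (Rmult_lt_reg_r (1 - r ^ 2)); [lra |]. field_simplify; lra.
Qed.

Lemma h1_weight_sq_sub_le s : 1 < s -> h1_weight s ^ 2 - h1_weight s <= s / (4 * (s - 1)).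
Proof.
  intros Hs. destruct (Rminus_sol_spec s) as [[Hr0 _] HK]; [lra |].
  pose proof (Rminus_sol_lt_1 s Hs). unfold h1_weight.
  set (r := Rminus_sol s) in *.
  assert (Hln : ln s = (r ^ 2 - 1) / 2 - ln r).
  { rewrite <- HK. unfold K, Rdiv at 1.
    rewrite ln_mult, ln_Rinv, ln_exp; [ring | lra | apply exp_pos | apply Rinv_0_lt_compat; lra]. }
  pose proof (ln_ge_1_sub_inv s ltac:(lra)).
  pose proof (neg_ln_le r ltac:(lra)).
  assert (Hbound : (s - 1) / s <= (1 - r ^ 2) ^ 2 / (4 * r ^ 2)).
  { replace ((s - 1) / s) with (1 - / s) by (field; lra).
    replace ((1 - r ^ 2) ^ 2 / (4 * r ^ 2)) with ((r ^ 2 - 1) / 2 + (/ r ^ 2 - r ^ 2) / 4)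
      by (field; lra).
    lra. }
  assert (0 < 1 - r ^ 2) by nra.
  replace ((1 / (1 - r ^ 2)) ^ 2 - 1 / (1 - r ^ 2)) with (r ^ 2 / (1 - r ^ 2) ^ 2)
    by (field; lra).
  assert (Hcross : 4 * r ^ 2 * (s - 1) <= s * (1 - r ^ 2) ^ 2).
  { apply (Rmult_le_compat_r (4 * r ^ 2 * s)) in Hbound; [| nra].
    replace ((s - 1) / s * (4 * r ^ 2 * s)) with (4 * r ^ 2 * (s - 1)) in Hbound by (field; lra).
    replace ((1 - r ^ 2) ^ 2 / (4 * r ^ 2) * (4 * r ^ 2 * s)) with (s * (1 - r ^ 2) ^ 2)
      in Hbound by (field; lra).
    exact Hbound. }
  apply (Rmult_le_reg_r ((1 - r ^ 2) ^ 2 * (4 * (s - 1))));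
    [apply Rmult_lt_0_compat; [apply pow_lt |]; lra |].
  replace (r ^ 2 / (1 - r ^ 2) ^ 2 * ((1 - r ^ 2) ^ 2 * (4 * (s - 1))))
    with (4 * r ^ 2 * (s - 1)) by (field; lra).
  replace (s / (4 * (s - 1)) * ((1 - r ^ 2) ^ 2 * (4 * (s - 1))))
    with (s * (1 - r ^ 2) ^ 2) by (field; lra).
  exact Hcross.
Qed.

Lemma le_of_sq_sub_le y Q : 1 <= Q -> y ^ 2 - y <= Q ^ 2 -> y <= 5 / 8 + Q.
Proof. intros HQ Hy. nra. Qed.

Lemma c_star_pos : 0 < c_star.
Proof. unfold c_star. apply Rdiv_lt_0_compat; [lra | apply sqrt_lt_R0; lra]. Qed.

Lemma c_star_sin_sub_1_ge x : PI / 3 < x < 2 * PI / 3 ->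
  c_star * (23 / 25) ^ 2 * ((x - PI / 3) * (2 * PI / 3 - x)) / 2 <= c_star * sin x - 1.
Proof.
  intros Hx. pose proof PI_RGT_0. pose proof PI_4.
  set (p := (x - PI / 3) / 2). set (q := (2 * PI / 3 - x) / 2).
  assert (Hdiff : sin x - sin (PI / 3) = 2 * sin q * sin p).
  { rewrite form4. replace ((x + PI / 3) / 2) with (PI / 2 - q) by (unfold q; field).
    rewrite cos_shift. reflexivity. }
  assert (Hc : c_star * sin (PI / 3) = 1).
  { rewrite sin_PI3. unfold c_star.
    assert (0 < sqrt 3) by (apply sqrt_lt_R0; lra). field. lra. }
  pose proof c_star_pos.
  pose proof (sin_ge_linear p ltac:(unfold p; lra)).
  pose proof (sin_ge_linear q ltac:(unfold q; lra)).
  assert (Hpq : 2 * (23 / 25) ^ 2 * (p * q) <= 2 * sin q * sin p)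
    by (assert (0 < p) by (unfold p; lra); assert (0 < q) by (unfold q; lra); nra).
  replace ((x - PI / 3) * (2 * PI / 3 - x)) with (4 * (p * q)) by (unfold p, q; field).
  replace (c_star * sin x - 1) with (c_star * (2 * sin q * sin p)) by (rewrite <- Hdiff; lra).
  nra.
Qed.

Lemma one_lt_c_star_sin x : PI / 3 < x < 2 * PI / 3 -> 1 < c_star * sin x.
Proof.
  intros Hx. pose proof (c_star_sin_sub_1_ge x Hx). pose proof c_star_pos.
  assert (0 < c_star * (23 / 25) ^ 2 * ((x - PI / 3) * (2 * PI / 3 - x)) / 2)
    by (apply Rdiv_lt_0_compat; [apply Rmult_lt_0_compat; nra | lra]).
  lra.
Qed.

Definition h1_majorant (x : R) : R :=
  5 / 8 + / (23 / 25 * sqrt 2) * / sqrt ((x - PI / 3) * (2 * PI / 3 - x)).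

Lemma h1_integrand_le_majorant x : PI / 3 < x < 2 * PI / 3 ->
  0 <= h1_integrand c_star x <= h1_majorant x.
Proof.
  intros Hx. pose proof PI_RGT_0. pose proof PI_4. pose proof c_star_pos.
  pose proof (c_star_sin_sub_1_ge x Hx) as Hs1. pose proof (one_lt_c_star_sin x Hx).
  set (D := (x - PI / 3) * (2 * PI / 3 - x)) in *.
  assert (HD : 0 < D <= 4 / 9).
  { replace D with ((PI / 6) ^ 2 - (x - PI / 2) ^ 2) by (unfold D; field).
    split; [| pose proof (pow2_ge_0 (x - PI / 2))]; nra. }
  set (s := c_star * sin x) in *.
  assert (Hs : 1 < s <= c_star).
  { split; [lra |]. unfold s. pose proof (SIN_bound x). nra. }
  change (h1_integrand c_star x) with (h1_weight s).
  pose proof (h1_weight_gt_1 s (proj1 Hs)).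
  split; [lra |].
  assert (0 < sqrt 2) by (apply sqrt_lt_R0; lra).
  assert (0 < sqrt D) by (apply sqrt_lt_R0; lra).
  set (Q := / (23 / 25 * sqrt 2) * / sqrt D).
  assert (HQ2 : Q ^ 2 = / (2 * (23 / 25) ^ 2 * D)).
  { replace (2 * (23 / 25) ^ 2 * D) with ((23 / 25 * sqrt 2 * sqrt D) ^ 2)
      by (rewrite !Rpow_mult_distr, !pow2_sqrt by lra; ring).
    unfold Q. field. lra. }
  assert (HQ : 1 <= Q).
  { assert (1 <= Q ^ 2).
    { rewrite HQ2. rewrite <- Rinv_1. apply Rinv_le_contravar; nra. }
    assert (0 < Q) by (unfold Q; apply Rmult_lt_0_compat; apply Rinv_0_lt_compat; nra).
    nra. }
  change (h1_majorant x) with (5 / 8 + Q).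
  apply le_of_sq_sub_le; [exact HQ |].
  eapply Rle_trans; [apply h1_weight_sq_sub_le; lra |].
  rewrite HQ2.
  apply (Rmult_le_reg_r (4 * (s - 1) * (2 * (23 / 25) ^ 2 * D))); [nra |].
  replace (s / (4 * (s - 1)) * (4 * (s - 1) * (2 * (23 / 25) ^ 2 * D)))
    with (s * (2 * (23 / 25) ^ 2 * D)) by (field; lra).
  replace (/ (2 * (23 / 25) ^ 2 * D) * (4 * (s - 1) * (2 * (23 / 25) ^ 2 * D)))
    with (4 * (s - 1)) by (field; lra).
  nra.
Qed.

Lemma h1_integrand_continuous x : PI / 3 < x < 2 * PI / 3 ->
  continuous (h1_integrand c_star) x.
Proof.
  intros Hx. pose proof (one_lt_c_star_sin x Hx) as Hs.
  destruct (Rminus_sol_spec (c_star * sin x)) as [[Hr0 _] _]; [lra |].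
  pose proof (Rminus_sol_lt_1 _ Hs).
  apply (continuous_comp (fun y => Rminus_sol (c_star * sin y)) (fun r => 1 / (1 - r ^ 2))).
  - apply (continuous_comp (fun y => c_star * sin y) Rminus_sol).
    + apply (ex_derive_continuous (fun y => c_star * sin y)). auto_derive. exact I.
    + exact (Rminus_sol_continuous _ Hs).
  - apply (ex_derive_continuous (fun r => 1 / (1 - r ^ 2))). auto_derive. nra.
Qed.

Lemma h1_majorant_continuous x : PI / 3 < x < 2 * PI / 3 -> continuous h1_majorant x.
Proof.
  intros Hx.
  assert (Hsqrt : 0 < sqrt ((x - PI / 3) * (2 * PI / 3 - x))) by (apply sqrt_lt_R0; nra).
  apply (ex_derive_continuous h1_majorant). unfold h1_majorant.
  auto_derive. unfold Rminus in Hsqrt. split; [nra | split; [lra | exact I]].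
Qed.

Lemma RInt_h1_majorant_le u v : PI / 3 < u -> u <= v -> v < 2 * PI / 3 ->
  RInt h1_majorant u v <= 5 / 8 * (PI / 3) + / (23 / 25 * sqrt 2) * PI.
Proof.
  intros Hu Huv Hv.
  set (g := fun x => / sqrt ((x - PI / 3) * (2 * PI / 3 - x))).
  assert (Hg : is_RInt g u v (RInt g u v)).
  { apply (RInt_correct g), (ex_RInt_continuous g).
    rewrite Rmin_left, Rmax_right by lra. intros x Hx. apply inv_sqrt_continuous. lra. }
  assert (Hmaj := is_RInt_plus _ _ u v _ _ (is_RInt_const u v (5 / 8))
                    (is_RInt_scal _ u v (/ (23 / 25 * sqrt 2)) _ Hg)).
  rewrite (is_RInt_unique h1_majorant u v _ (is_RInt_ext _ _ u v _ (fun _ _ => eq_refl) Hmaj)).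
  pose proof (RInt_inv_sqrt_le_PI (PI / 3) (2 * PI / 3) u v Hu Huv Hv) as Hg_le.
  assert (0 < / (23 / 25 * sqrt 2))
    by (apply Rinv_0_lt_compat, Rmult_lt_0_compat, sqrt_lt_R0; lra).
  unfold plus, scal; simpl; unfold mult; simpl. fold g in Hg_le. nra.
Qed.

Lemma h1_majorant_bound_lt_PI : 5 / 8 * (PI / 3) + / (23 / 25 * sqrt 2) * PI < PI.
Proof.
  pose proof PI_RGT_0.
  assert (H2 : 1.41 < sqrt 2).
  { rewrite <- (sqrt_pow2 1.41) by lra. apply sqrt_lt_1_alt. lra. }
  assert (/ (23 / 25 * sqrt 2) < 19 / 24).
  { rewrite <- (Rinv_inv (19 / 24)). apply Rinv_lt_contravar; [| lra].
    apply Rmult_lt_0_compat; lra. }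
  nra.
Qed.

Lemma RInt_h1_integrand_le u v : PI / 3 < u -> u <= v -> v < 2 * PI / 3 ->
  RInt (h1_integrand c_star) u v <= 5 / 8 * (PI / 3) + / (23 / 25 * sqrt 2) * PI.
Proof.
  intros Hu Huv Hv.
  eapply Rle_trans; [| apply (RInt_h1_majorant_le u v Hu Huv Hv)].
  apply RInt_le; [exact Huv | | | intros x Hx; apply h1_integrand_le_majorant; lra].
  - exact (ex_RInt_inner _ _ _ h1_integrand_continuous u v Hu Huv Hv).
  - exact (ex_RInt_inner _ _ _ h1_majorant_continuous u v Hu Huv Hv).
Qed.

Theorem mainTheorem11 :
  exists l : R,
    is_RInt_gen (h1_integrand c_star) (at_right (PI / 3)) (at_left (2 * PI / 3)) l
    /\ l < PI.
Proof.
  destruct (is_RInt_gen_nonneg_bounded (h1_integrand c_star) (PI / 3) (2 * PI / 3)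
              h1_integrand_continuous (fun x Hx => proj1 (h1_integrand_le_majorant x Hx))
              _ ltac:(pose proof PI_RGT_0; lra) RInt_h1_integrand_le)
    as [l [Hl HlB]].
  exists l. split; [exact Hl |].
  pose proof h1_majorant_bound_lt_PI. lra.
Qed.
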